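(* Let $N\ge 1$, $Z=\{1,\dots,N\}$, and let $W=(w_{ij})\in\mathbb R^{N\times N}$ be a symmetric weight matrix with nonnegative entries and positive degrees $d_i=\sum_{j\in Z}w_{ij}$; put $D=\mathrm{diag}(d_i)$ and, for some $p\in\mathbb R$, $L=D^{-p}(D-W)D^{-p}$. For $\tau^2,\alpha>0$ let $C_\tau=\tau^{2\alpha}(L+\tau^2 I)^{-\alpha}=(c_{ij})$, with columns $\mathbf c_j=C_\tau\mathbf e_j$, where $\mathbf e_j$ is the $j$-th standard basis vector of $\mathbb R^N$. Let $Z'\subseteq Z$ and $y:Z'\to\{-1,+1\}$. Let $\psi$ be a probability density on $\mathbb R$ that is continuously differentiable, symmetric, strictly log-concave and has full support on $\mathbb R$, with CDF $\Psi$. Define $$\mathsf J(\mathbf u)=\tfrac12\langle \mathbf u,C_\tau^{-1}\mathbf u\rangle-\sum_{j\in Z'}\log\Psi(u_jy(j)),\qquad \mathbf u\in\mathbb R^N,$$ and $F_j(s)=\dfrac{y(j)\psi(sy(j))}{\Psi(sy(j))}$ for $j\in Z'$. Then: (i) $\mathsf J$ has a unique minimizer $\mathbf u^\ast\in\mathbb R^N$; (ii) $\mathbf u^\ast$ satisfies $C_\tau^{-1}\mathbf u^\ast=\sum_{j\in Z'}F_j(u^\ast_j)\mathbf e_j$; (iii) $\mathbf u^\ast=\sum_{j\in Z'}\breve a_j\mathbf c_j$ for some coefficients $\breve a_j\in\mathbb R$; (iv) a vector of the form $\mathbf u^\ast=\sum_{j\in Z'}\breve a_j\mathbf c_j$ solves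 the equation in (ii) if and only if the coefficients satisfy $\breve a_j=F_j\big(\sum_{k\in Z'}\breve a_kc_{jk}\big)$ for all $j\in Z'$.
   Context: $\langle\cdot,\cdot\rangle$ is the Euclidean inner product on $\mathbb R^N$. *)

From HB Require Import structures.
From mathcomp Require Import all_boot all_order all_algebra.
From mathcomp Require Import all_classical all_reals all_analysis.
Set Implicit Arguments. Unset Strict Implicit. Unset Printing Implicit Defensive.
Import Order.TTheory GRing.Theory Num.Theory.
Local Open Scope ring_scope.
Local Open Scope classical_set_scope.

Section Defs.
Variable R : realType.

Definition is_mx_rpow (n : nat) (M : 'M[R]_n) (a : R) (P : 'M[R]_n) : Prop :=
  exists (Q : 'M[R]_n) (lam : 'rV[R]_n),
    [/\ Q *m Q^T = 1%:M, (forall i, 0 < lam 0 i),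
        M = Q *m diag_mx lam *m Q^T &
        P = Q *m diag_mx (map_mx (fun x => x `^ a) lam) *m Q^T].

Definition degree (n : nat) (W : 'M[R]_n) (i : 'I_n) : R := \sum_(j < n) W i j.

Definition normalized_laplacian (n : nat) (W : 'M[R]_n) (p : R) : 'M[R]_n :=
  let D := diag_mx (\row_i degree W i) in
  let Dp := diag_mx (\row_i (degree W i) `^ (- p)) in
  Dp *m (D - W) *m Dp.

Definition strictly_log_concave (f : R -> R) : Prop :=
  forall x y t : R, x != y -> 0 < t < 1 ->
    t * ln (f x) + (1 - t) * ln (f y) < ln (f (t * x + (1 - t) * y)).

Definition prob_density (f : R -> R) : Prop :=
  (forall x, 0 <= f x) /\
  measurable_fun setT f /\
  (\int[@lebesgue_measure R]_(t in setT) (f t)%:E = 1)%E.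

Definition C1_fun (f : R -> R) : Prop :=
  (forall x, derivable f x 1) /\ continuous (f^`() : R^o -> R^o).

Definition is_cdf_of (f Fc : R -> R) : Prop :=
  forall x, (\int[@lebesgue_measure R]_(t in `]-oo, x]) (f t)%:E = (Fc x)%:E)%E.

Definition Jfun (n : nat) (C : 'M[R]_n) (S : {set 'I_n}) (y : 'I_n -> R)
  (Psi : R -> R) (u : 'cV[R]_n) : R :=
  2^-1 * (u^T *m invmx C *m u) 0 0 - \sum_(j in S) ln (Psi (u j 0 * y j)).

Definition Ffun (n : nat) (y : 'I_n -> R) (psi Psi : R -> R) (j : 'I_n) (s : R) : R :=
  y j * psi (s * y j) / Psi (s * y j).

End Defs.

From HB Require Import structures.
From mathcomp Require Import all_boot all_order all_algebra.
From mathcomp Require Import all_classical all_reals all_analysis.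
Import Order.TTheory GRing.Theory Num.Theory.
Local Open Scope ring_scope.
Local Open Scope classical_set_scope.

From mathcomp Require Import measurable_realfun ring.
Import numFieldNormedType.Exports.

(* C^-1 = tau2^-alpha Q diag(lam^alpha) Q^T is positive definite, so the quadratic
   part of J is coercive, while -ln Psi >= 0 is continuous: J attains its minimum
   on a large box.  At a minimizer every partial derivative vanishes, which is the
   equation C^-1 u = sum_j F_j(u_j) e_j.  Log-concavity of psi makes psi / Psi
   antitone (write psi z * Psi x and psi x * Psi z as integrals over ]-oo, x] of
   psi z * psi t and psi x * psi (t + z - x) and compare pointwise), so for two
   solutions u, v of that equation
     0 <= m |u - v|^2 <= <u - v, C^-1 (u - v)> = sum_j (u_j - v_j) (F_j u_j - F_j v_j) <= 0,
   and the solution, hence the minimizer, is unique.  Items (iii) and (iv) are the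
   same equation read through the substitution u = C a. *)

Section real_analysis.
Context {R : realType}.
Notation mu := (@lebesgue_measure R).

Lemma is_derive_eq0_at_min {f df : R -> R} {c : R} :
  (forall t : R, is_derive t 1 f (df t)) -> (forall t, f c <= f t) -> df c = 0.
Proof.
move=> f_df cmin.
have f'c0 : is_derive c 1 f 0.
  apply: (@derive1_at_min _ _ (c - 1) (c + 1)).
  - by rewrite lerD2l; apply: (@le_trans _ _ 0); rewrite ?oppr_le0 ?ler01.
  - by move=> t _; exact: ex_derive.
  - by rewrite in_itv /= ltrBlDr !ltrDl ltr01.
  - by move=> t _.
by case: (f_df c) => _ <-; case: f'c0.
Qed.

Lemma antitone_cross_le0 (h : R -> R) :
  (forall x z, x < z -> h z <= h x) -> forall a b, (a - b) * (h a - h b) <= 0.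
Proof.
move=> h_anti a b; have [ab|ba|->] := ltgtP a b.
- by rewrite mulr_le0_ge0 // ?subr_le0 ?subr_ge0 ?h_anti // ltW.
- by rewrite mulr_ge0_le0 // ?subr_le0 ?subr_ge0 ?h_anti // ltW.
- by rewrite subrr mul0r.
Qed.

Lemma log_concave_exchange (f : R -> R) :
  strictly_log_concave f -> (forall x, 0 < f x) ->
  forall s x z, s <= x -> x < z -> f z * f s <= f x * f (s + (z - x)).
Proof.
move=> f_lc f_gt0 s x z sx xz.
have [->|s_neq_x] := eqVneq s x; first by rewrite addrC subrK mulrC.
have {s_neq_x} {}sx : s < x by rewrite lt_def eq_sym s_neq_x sx.
have sz : s < z := lt_trans sx xz.
have zs_gt0 : 0 < z - s by rewrite subr_gt0.
set l := (z - x) / (z - s).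
have l_gt0 : 0 < l by rewrite divr_gt0 // subr_gt0.
have l_lt1 : l < 1 by rewrite ltr_pdivrMr // mul1r ltrD2l ltrN2.
have s_neq_z : s != z by rewrite lt_eqF.
(* x and s + (z - x) are the convex combinations of s and z with weights l and 1 - l *)
have Hx := f_lc s z l s_neq_z ltac:(by rewrite l_gt0 l_lt1).
have Hs := f_lc s z (1 - l) s_neq_z ltac:(by rewrite subr_gt0 l_lt1 ltrBlDr ltrDl l_gt0).
rewrite (_ : l * s + _ = x) in Hx; last by rewrite /l; field; rewrite gt_eqF.
rewrite (_ : (1 - l) * s + _ = s + (z - x)) in Hs; last first.
  by rewrite /l; field; rewrite gt_eqF.
rewrite -ler_ln ?posrE ?mulr_gt0 // !lnM ?posrE //.
apply/ltW; apply: le_lt_trans (ltrD Hx Hs).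
by rewrite le_eqVlt; apply/orP; left; apply/eqP; ring.
Qed.

Lemma integral_shift (f : R -> R) (d b : R) : continuous f -> (forall x, 0 <= f x) ->
  (\int[mu]_(x in `]-oo, (b + d)%R]) (f x)%:E =
   \int[mu]_(x in `]-oo, b]) (f (x + d)%R)%:E)%E.
Proof.
move=> f_cont f_ge0.
have shift_derive (x : R) : is_derive x 1 (fun s : R => s + d) 1.
  by apply: is_derive_eq; rewrite addr0.
have shift_derive1 : (fun s : R => s + d)^`() = cst 1.
  by apply/funext => x; rewrite derive1E derive_val.
rewrite (@increasing_ge0_integration_by_substitutionNy R (fun s => s + d) f b);
  rewrite ?shift_derive1.
- by apply: eq_integral => x _; rewrite /= mulr1.
- by move=> x y _ _; rewrite ltrD2r.
- by move=> x _; exact: cst_continuous.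
- by apply/cvg_ex; exists 1; exact: cvg_cst.
- exact: cvg_cst.
- split; first by move=> x _; exact: ex_derive.
  by apply: cvg_at_left_filter; apply: cvgD; [exact: cvg_id | exact: cvg_cst].
- exact: cvg_addrr_Ny.
- exact: continuous_subspaceT.
- by move=> x _.
Qed.

End real_analysis.

Section density.
Context {R : realType} {psi Psi : R -> R}.
Notation mu := (@lebesgue_measure R).
Hypotheses (psi_density : prob_density psi) (psi_C1 : C1_fun psi)
  (Psi_cdf : is_cdf_of psi Psi).

Let psi_ge0 : forall x, 0 <= psi x. Proof. by case: psi_density. Qed.
Let psi_measurable : measurable_fun setT psi. Proof. by case: psi_density => _ []. Qed.

Lemma density_continuous : continuous psi.
Proof.
by move=> x; apply: differentiable_continuous; apply/derivable1_diffP; case: psi_C1.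
Qed.

Lemma density_integrable (A : set R) : measurable A -> mu.-integrable A (EFin \o psi).
Proof.
move=> mA; apply/integrableP; split.
  by apply/measurable_EFinP; exact: measurable_funS psi_measurable.
under eq_integral => t _ do rewrite /= ger0_norm //.
apply: (@le_lt_trans _ _ (\int[mu]_(t in setT) (psi t)%:E)%E).
  by apply: ge0_subset_integral => //=; [exact/measurable_EFinP | move=> t _; rewrite lee_fin].
by case: psi_density => _ [_ ->]; rewrite ltry.
Qed.

Lemma is_derive_cdf (x : R) : is_derive x 1 Psi (psi x).
Proof.
have Psi_int : Psi = fun z => \int[mu]_(t in `]-oo, z]) psi t.
  by apply/funext => z; rewrite /Rintegral Psi_cdf.
have [] := @continuous_FTC1 R psi (BInfty _ true) x (x + 1) ltac:(by rewrite ltrDl)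
  (density_integrable _ (measurable_itv _)) (ltNyr x) (density_continuous x).
rewrite -Psi_int => Psi_der <-.
by rewrite derive1E; exact: derivableP.
Qed.

Lemma cdf_continuous : continuous Psi.
Proof.
move=> x; apply: differentiable_continuous; apply/derivable1_diffP.
by have := is_derive_cdf x.
Qed.

Lemma cdf_ge0 x : 0 <= Psi x.
Proof. by rewrite -lee_fin -Psi_cdf; apply: integral_ge0 => t _; rewrite lee_fin. Qed.

Lemma cdf_le1 x : Psi x <= 1.
Proof.
rewrite -lee_fin -Psi_cdf; case: psi_density => _ [_ <-].
apply: ge0_subset_integral => //=; first exact/measurable_EFinP.
by move=> t _; rewrite lee_fin.
Qed.

Hypothesis psi_gt0 : forall x, 0 < psi x.

Lemma cdf_gt0 x : 0 < Psi x.
Proof.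
rewrite lt_def cdf_ge0 andbT; apply/eqP => Psi_x0.
have Psi_min t : Psi x <= Psi t by rewrite Psi_x0 cdf_ge0.
by have /eqP := is_derive_eq0_at_min is_derive_cdf Psi_min; rewrite gt_eqF.
Qed.

Hypothesis psi_log_concave : strictly_log_concave psi.

Lemma density_cdf_cross x z : x < z -> psi z * Psi x <= psi x * Psi z.
Proof.
move=> xz; set d := z - x.
have shift_cont : continuous (fun t => psi (t + d)).
  move=> t; apply: continuous_comp; last exact: density_continuous.
  by apply: cvgD; [exact: cvg_id | exact: cvg_cst].
have Psi_z : (Psi z)%:E = (\int[mu]_(t in `]-oo, x]) (psi (t + d))%:E)%E.
  by rewrite -Psi_cdf -integral_shift ?subrKC //; exact: density_continuous.
have meas_itv (g : R -> R) : continuous g -> measurable_fun `]-oo, x] (EFin \o g).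
  by move=> g_cont; apply/measurable_EFinP;
     apply: measurable_funS (continuous_measurable_fun g_cont).
have ge0_itv (g : R -> R) : (forall t, 0 <= g t) ->
    forall t, `]-oo, x] t -> (0 <= (EFin \o g) t)%E.
  by move=> g_ge0 t _; rewrite lee_fin.
rewrite -lee_fin !EFinM Psi_z -Psi_cdf.
have shift_ge0 t : 0 <= psi (t + d) := psi_ge0 _.
rewrite -(ge0_integralZl_EFin mu (measurable_itv _) (ge0_itv _ psi_ge0)
  (meas_itv _ density_continuous) (ltW (psi_gt0 z))).
rewrite -(ge0_integralZl_EFin mu (measurable_itv _) (ge0_itv _ shift_ge0)
  (meas_itv _ shift_cont) (ltW (psi_gt0 x))).
apply: ge0_le_integral => //.
- by move=> t _; rewrite lee_fin mulr_ge0 // ltW.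
- apply: (meas_itv (fun t => psi z * psi t)) => t.
  by apply: continuousM; [exact: cst_continuous | exact: density_continuous].
- apply: (meas_itv (fun t => psi x * psi (t + d))) => t.
  by apply: continuousM; [exact: cst_continuous | exact: shift_cont].
- move=> t /=; rewrite in_itv /= lee_fin => tx.
  exact: log_concave_exchange.
Qed.

Lemma density_div_cdf_antitone x z : x < z -> psi z / Psi z <= psi x / Psi x.
Proof.
move=> xz; rewrite ler_pdivrMr ?cdf_gt0 // mulrAC ler_pdivlMr ?cdf_gt0 //.
by rewrite [leRHS]mulrC [in leRHS]mulrC; exact: density_cdf_cross.
Qed.

End density.

Section matrix_facts.
Context {R : comPzRingType} {n : nat}.
Implicit Types (K Q : 'M[R]_n) (u : 'cV[R]_n) (lam : 'rV[R]_n).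

Definition qform K u : R := (u^T *m K *m u) 0 0.

Definition spectral_mx (c : R) Q lam : 'M[R]_n := c *: (Q *m diag_mx lam *m Q^T).

Lemma sum_delta_mxE (S : {set 'I_n}) (a : 'I_n -> R) (k : 'I_n) :
  (\sum_(j in S) a j *: delta_mx j (0 : 'I_1)) k 0 = if k \in S then a k else 0.
Proof.
rewrite summxE; case: ifP => kS.
  rewrite (bigD1 k) //= !mxE !eqxx mulr1 big1 ?addr0 // => j /andP[_ jk].
  by rewrite !mxE eq_sym (negbTE jk) mulr0.
rewrite big1 // => j jS; rewrite !mxE (_ : k == j = false) ?mulr0 //.
by apply: contraFF kS => /eqP ->.
Qed.

Lemma sum_scale_col (C : 'M[R]_n) (S : {set 'I_n}) (a : 'I_n -> R) :
  \sum_(j in S) a j *: col j C = C *m \sum_(j in S) a j *: delta_mx j 0.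
Proof. by rewrite mulmx_sumr; apply: eq_bigr => j _; rewrite -scalemxAr colE. Qed.

Lemma qform_add_delta K u (i : 'I_n) (s : R) : K^T = K ->
  qform K (u + s *: delta_mx i 0) = qform K u + 2 * s * (K *m u) i 0 + s ^+ 2 * K i i.
Proof.
move=> KT; set e := delta_mx i (0 : 'I_1).
have eKu : (e^T *m K *m u) 0 0 = (K *m u) i 0.
  by rewrite trmx_delta -mulmxA -rowE mxE.
have uKe : (u^T *m K *m e) 0 0 = (K *m u) i 0.
  have tr11 (A : 'M[R]_1) : A 0 0 = A^T 0 0 by rewrite mxE.
  by rewrite -eKu tr11 !trmx_mul trmxK KT mulmxA.
have eKe : (e^T *m K *m e) 0 0 = K i i by rewrite trmx_delta -rowE -colE !mxE.
have tr_ue : (u + s *: e)^T = u^T + s *: e^T by rewrite linearD linearZ.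
rewrite /qform tr_ue !mulmxDl !mulmxDr -!scalemxAl -!scalemxAr.
have addE (A B : 'M[R]_1) : (A + B) 0 0 = A 0 0 + B 0 0 by rewrite mxE.
have scaleE a (A : 'M[R]_1) : (a *: A) 0 0 = a * A 0 0 by rewrite mxE.
by rewrite !addE !scaleE eKu uKe eKe; ring.
Qed.

Lemma sum_sqr_orthogonal Q u : Q *m Q^T = 1%:M ->
  \sum_i (Q^T *m u) i 0 ^+ 2 = \sum_i u i 0 ^+ 2.
Proof.
move=> QQ; have sum_sqrE (v : 'cV[R]_n) : \sum_i v i 0 ^+ 2 = (v^T *m v) 0 0.
  by rewrite mxE; apply: eq_bigr => i _; rewrite !mxE expr2.
by rewrite !sum_sqrE trmx_mul trmxK mulmxA -(mulmxA u^T) QQ mulmx1.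
Qed.

Lemma tr_spectral_mx c Q lam : (spectral_mx c Q lam)^T = spectral_mx c Q lam.
Proof. by rewrite /spectral_mx linearZ /= !trmx_mul trmxK tr_diag_mx mulmxA. Qed.

Lemma spectral_mx_mulV c c' Q lam lam' :
  Q *m Q^T = 1%:M -> c * c' = 1 -> (forall i, lam 0 i * lam' 0 i = 1) ->
  spectral_mx c Q lam *m spectral_mx c' Q lam' = 1%:M.
Proof.
move=> QQ cc' lam_lam'.
have diag1 : diag_mx (\row_j (lam 0 j * lam' 0 j)) = 1%:M.
  by apply/matrixP => i j; rewrite !mxE lam_lam'.
rewrite /spectral_mx -scalemxAl -scalemxAr scalerA cc' scale1r.
rewrite -!mulmxA (mulmxA Q^T) (mulmx1C QQ) mul1mx (mulmxA (diag_mx lam)) mulmx_diag.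
by rewrite diag1 mul1mx.
Qed.

End matrix_facts.

Lemma spectral_mx_inv {R : comUnitRingType} {n : nat} (c c' : R) (Q : 'M[R]_n)
    (lam lam' : 'rV[R]_n) :
  Q *m Q^T = 1%:M -> c * c' = 1 -> (forall i, lam 0 i * lam' 0 i = 1) ->
  spectral_mx c Q lam \in unitmx /\ invmx (spectral_mx c Q lam) = spectral_mx c' Q lam'.
Proof.
move=> QQ cc' lam_lam'.
have AB : spectral_mx c Q lam *m spectral_mx c' Q lam' = 1%:M by exact: spectral_mx_mulV.
have [A_unit _] := mulmx1_unit AB.
by split => //; rewrite -[RHS](mulKmx A_unit) AB mulmx1.
Qed.

Definition coercive {R : realFieldType} {n : nat} (K : 'M[R]_n) : Prop :=
  exists2 m, 0 < m & forall u : 'cV[R]_n, m * \sum_i u i 0 ^+ 2 <= qform K u.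

Lemma spectral_mx_coercive {R : realFieldType} {n : nat} (c : R) (Q : 'M[R]_n)
    (lam : 'rV[R]_n) :
  Q *m Q^T = 1%:M -> 0 < c -> (forall i, 0 < lam 0 i) -> coercive (spectral_mx c Q lam).
Proof.
move=> QQ c_gt0 lam_gt0.
(* a positive lower bound for every eigenvalue, avoiding a minimum over 'I_n *)
set M := 1 + \sum_j (lam 0 j)^-1.
have M_gt0 : 0 < M by rewrite ltr_pwDl // sumr_ge0 // => j _; rewrite invr_ge0 ltW.
have lam_ge : forall i, M^-1 <= lam 0 i.
  move=> i; rewrite -[leRHS]invrK lef_pV2 ?posrE ?invr_gt0 //.
  rewrite /M (bigD1 i) //= addrCA ler_wpDr // addr_ge0 // sumr_ge0 // => j _.
  by rewrite invr_ge0 ltW.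
exists (c / M); first by rewrite divr_gt0.
move=> u; set v := Q^T *m u.
have -> : qform (spectral_mx c Q lam) u = c * (v^T *m diag_mx lam *m v) 0 0.
  by rewrite /qform /spectral_mx /v trmx_mul trmxK -scalemxAr -scalemxAl !mulmxA mxE.
rewrite -(sum_sqr_orthogonal _ u QQ) -/v -mulrA ler_pM2l // mulr_sumr mxE.
apply: ler_sum => i _; rewrite mul_mx_diag !mxE.
by rewrite mulrAC -expr2 mulrC ler_wpM2l ?sqr_ge0.
Qed.

Definition Jquad {R : realType} {n : nat} (K : 'M[R]_n) (S : {set 'I_n}) (y : 'I_n -> R)
    (Psi : R -> R) (u : 'cV[R]_n) : R :=
  2^-1 * qform K u - \sum_(j in S) ln (Psi (u j 0 * y j)).

Definition loglik_grad {R : realType} {n : nat} (S : {set 'I_n}) (y : 'I_n -> R)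
    (psi Psi : R -> R) (u : 'cV[R]_n) : 'cV[R]_n :=
  \sum_(j in S) Ffun y psi Psi j (u j 0) *: delta_mx j 0.

Section penalized_likelihood.
Context {R : realType} {n : nat} {K : 'M[R]_n} {S : {set 'I_n}} {y : 'I_n -> R}
  {psi Psi : R -> R}.
Local Notation Jquad := (Jquad K S y Psi).
Local Notation loglik_grad := (loglik_grad S y psi Psi).

Hypothesis Psi_gt0 : forall x, 0 < Psi x.

Lemma Jquad_continuous : continuous Psi -> continuous (fun v : 'rV[R]_n => Jquad v^T).
Proof.
move=> Psi_cont.
have sum_cont (I : Type) (r : seq I) (P : pred I) (F : I -> 'rV[R]_n -> R) :
    (forall i, continuous (F i)) -> continuous (fun v => \sum_(i <- r | P i) F i v).
  by move=> F_cont; apply: continuous_big => [|i _]; [exact: add_continuous | exact: F_cont].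
have qformE (v : 'rV[R]_n) : qform K v^T = \sum_i \sum_k v 0 i * K i k * v 0 k.
  rewrite /qform trmxK mxE exchange_big /=; apply: eq_bigr => k _.
  by rewrite !mxE mulr_suml.
have coordM_cont (i : 'I_n) (c : R) : continuous (fun v : 'rV[R]_n => v 0 i * c).
  move=> w; apply: (@continuousM _ _ (fun v : 'rV[R]_n => v 0 i) (cst c)).
    exact: coord_continuous.
  exact: cst_continuous.
have quad_cont : continuous (fun v : 'rV[R]_n => 2^-1 * qform K v^T).
  under eq_fun => v do rewrite qformE.
  move=> w; apply: (@continuousM _ _ (cst 2^-1)); first exact: cst_continuous.
  apply: (sum_cont) => i; apply: (sum_cont) => k {}w.
  apply: (@continuousM _ _ (fun v : 'rV[R]_n => v 0 i * K i k) (fun v => v 0 k)).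
    exact: coordM_cont.
  exact: coord_continuous.
have loglik_cont : continuous (fun v : 'rV[R]_n => \sum_(j in S) ln (Psi (v^T j 0 * y j))).
  apply: (sum_cont) => j w; under eq_fun => v do rewrite mxE.
  apply: continuous_comp; last exact: continuous_ln.
  by apply: continuous_comp; [exact: coordM_cont | exact: Psi_cont].
move=> w; apply: (@continuousB _ _ _ (fun v : 'rV[R]_n => 2^-1 * qform K v^T)).
  exact: quad_cont.
exact: loglik_cont.
Qed.

Hypothesis Psi_le1 : forall x, Psi x <= 1.

Lemma Jquad_ge_qform u : 2^-1 * qform K u <= Jquad u.
Proof. by rewrite /Jquad lerBrDr gerDl sumr_le0 // => j _; exact: ln_le0. Qed.

Lemma Jquad0_ge0 : 0 <= Jquad 0.
Proof.
rewrite /Jquad /qform trmx0 !mul0mx mxE mulr0 sub0r oppr_ge0.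
by rewrite sumr_le0 // => j _; exact: ln_le0.
Qed.

Lemma Jquad_has_minimizer : continuous Psi -> coercive K ->
  exists u, forall v, Jquad u <= Jquad v.
Proof.
move=> Psi_cont [m m_gt0 K_coercive].
(* outside this box, Jquad exceeds Jquad 0 *)
set r := 2 * Jquad 0 / m + 1.
have r_ge1 : 1 <= r by rewrite lerDr divr_ge0 ?mulr_ge0 ?Jquad0_ge0 // ltW.
pose box := [set v : 'rV[R]_n | forall i, `[-r, r] (v 0 i)].
have box0 : box 0.
  by move=> i; rewrite /= mxE in_itv /= oppr_le0 (le_trans ler01 r_ge1).
have [c _ c_min] := EVT_min_rV (ex_intro _ 0 box0)
  (rV_compact (fun=> @segment_compact _ (- r) r))
  (continuous_subspaceT (Jquad_continuous Psi_cont)).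
exists c^T => v; rewrite -[v]trmxK.
have [v_box | /negP v_out] := boolP (v^T \in box); first exact: c_min.
apply: le_trans (c_min 0 _) _; first by rewrite inE.
rewrite trmx0; apply/ltW.
have [i /= v_i_out] : exists i, ~ `[-r, r] (v^T 0 i).
  by apply/existsNP => v_in; apply: v_out; rewrite inE.
have r_lt_vi : r < `|v i 0|.
  by rewrite mxE in_itv /= -ler_norml in v_i_out; rewrite ltNge; exact/negP.
have r_le_sum : r <= \sum_k v k 0 ^+ 2.
  rewrite (bigD1 i) //= -real_normK ?num_real //; apply: ler_wpDr.
    by rewrite sumr_ge0 // => k _; exact: sqr_ge0.
  apply: le_trans (ltW r_lt_vi) _; rewrite expr2 ler_peMl //.
  exact: le_trans r_ge1 (ltW r_lt_vi).
rewrite trmxK; apply: lt_le_trans (Jquad_ge_qform v).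
apply: (@lt_le_trans _ _ (2^-1 * (m * r))); last first.
  rewrite ler_pM2l ?invr_gt0 ?ltr0n //; apply: le_trans (K_coercive v).
  by rewrite ler_pM2l.
have -> : 2^-1 * (m * r) = Jquad 0 + m / 2 by rewrite /r; field; rewrite gt_eqF.
by rewrite ltrDl divr_gt0.
Qed.

Hypothesis K_sym : K^T = K.

Lemma Jquad_along_delta u (i : 'I_n) (s : R) :
  Jquad (u + s *: delta_mx i 0) =
    2^-1 * (qform K u + 2 * s * (K *m u) i 0 + s ^+ 2 * K i i)
    - \sum_(j in S | j != i) ln (Psi (u j 0 * y j))
    - (i \in S)%:R * ln (Psi ((u i 0 + s) * y i)).
Proof.
have entry j : (u + s *: delta_mx i 0) j 0 = u j 0 + (j == i)%:R * s.
  by rewrite !mxE eqxx andbT mulrC.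
rewrite /Jquad qform_add_delta // -[RHS]addrA -opprD; congr (_ - _).
have [iS | iNS] := boolP (i \in S).
  rewrite (bigD1 i) //= entry eqxx !mul1r addrC; congr (_ + _).
  by apply: eq_bigr => j /andP[_ /negbTE ji]; rewrite entry ji mulr0n mul0r addr0.
have neq_i j : j \in S -> (j == i) = false by move=> jS; apply: contraNF iNS => /eqP <-.
rewrite mulr0n mul0r addr0; apply: eq_big => [j | j jS].
  by case jS: (j \in S); rewrite //= neq_i.
by rewrite entry neq_i // mulr0n mul0r addr0.
Qed.

Hypothesis Psi_derive : forall x : R, is_derive x 1 Psi (psi x).

Lemma is_derive_Jquad_along_delta u (i : 'I_n) (t : R) :
  is_derive t 1 (fun s => Jquad (u + s *: delta_mx i 0))
    ((K *m u) i 0 + t * K i i - (i \in S)%:R * Ffun y psi Psi i (u i 0 + t)).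
Proof.
have lnPsi_derive : is_derive t 1 (fun s => ln (Psi ((u i 0 + s) * y i)))
    (Ffun y psi Psi i (u i 0 + t)).
  set w := (u i 0 + t) * y i.
  have affine_derive : is_derive t 1 (fun s => (u i 0 + s) * y i) (y i).
    by apply: is_derive_eq; rewrite /GRing.scale /=; ring.
  have lnPsi_w : is_derive w 1 (@ln R \o Psi) ((Psi w)^-1 * psi w).
    exact: is_derive1_comp (is_derive1_ln (Psi_gt0 w)) (Psi_derive w).
  have := is_derive1_comp (g := fun s => (u i 0 + s) * y i) lnPsi_w affine_derive.
  by move/is_derive_eq; apply; rewrite /Ffun; ring.
under eq_fun => s do rewrite Jquad_along_delta.
by apply: is_derive_eq; rewrite /GRing.scale /=; field.
Qed.

Lemma Jquad_minimizer_grad u : (forall v, Jquad u <= Jquad v) -> K *m u = loglik_grad u.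
Proof.
move=> u_min; apply/matrixP => i j; rewrite ord1 sum_delta_mxE.
have min_at0 t : Jquad (u + 0 *: delta_mx i 0) <= Jquad (u + t *: delta_mx i 0).
  by rewrite scale0r addr0; exact: u_min.
have /eqP := is_derive_eq0_at_min (is_derive_Jquad_along_delta u i) min_at0.
by rewrite mul0r addr0 addr0 subr_eq0 => /eqP ->; case: (i \in S); rewrite ?mul1r ?mul0r.
Qed.

Lemma loglik_grad_eq_unique u v : coercive K ->
  (forall x z, x < z -> psi z / Psi z <= psi x / Psi x) ->
  K *m u = loglik_grad u -> K *m v = loglik_grad v -> u = v.
Proof.
move=> [m m_gt0 K_coercive] h_anti Ku Kv; set w := u - v.
have qform_w : qform K w = \sum_(j in S) (u j 0 * y j - v j 0 * y j) *
    (psi (u j 0 * y j) / Psi (u j 0 * y j) - psi (v j 0 * y j) / Psi (v j 0 * y j)).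
  rewrite /qform -mulmxA mulmxBr Ku Kv mxE [RHS]big_mkcond /=.
  apply: eq_bigr => k _; rewrite !mxE !sum_delta_mxE.
  by case: ifP => _; rewrite /Ffun; [ring | rewrite subrr mulr0].
have qform_w_le0 : qform K w <= 0.
  rewrite qform_w sumr_le0 // => j _.
  exact: (@antitone_cross_le0 _ (fun s => psi s / Psi s) h_anti).
have sum_sqr_w0 : \sum_i w i 0 ^+ 2 = 0.
  apply/eqP; rewrite eq_le sumr_ge0 ?andbT => [|i _]; last exact: sqr_ge0.
  by rewrite -(pmulr_rle0 _ m_gt0); exact: le_trans (K_coercive w) qform_w_le0.
apply/matrixP => i j; rewrite ord1; apply/eqP; rewrite -subr_eq0.
have := psumr_eq0P (fun i _ => sqr_ge0 (w i 0)) sum_sqr_w0 (i := i) isT.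
by move/eqP; rewrite sqrf_eq0 /w !mxE.
Qed.

End penalized_likelihood.

Lemma representer_grad_eq {R : realType} {n : nat} (C : 'M[R]_n) (S : {set 'I_n})
    (y : 'I_n -> R) (psi Psi : R -> R) (a : 'I_n -> R) :
  C \in unitmx ->
  let u := \sum_(j in S) a j *: col j C in
  invmx C *m u = loglik_grad S y psi Psi u <->
  (forall j, j \in S -> a j = Ffun y psi Psi j (\sum_(k in S) a k * C j k)).
Proof.
move=> C_unit u.
have u_coord j : u j 0 = \sum_(k in S) a k * C j k.
  by rewrite /u summxE; apply: eq_bigr => k _; rewrite !mxE.
rewrite /u sum_scale_col mulKmx // -sum_scale_col -/u /loglik_grad; split.
- move=> grad_eq j jS; have := congr1 (fun v : 'cV[R]_n => v j 0) grad_eq.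
  by rewrite /= !sum_delta_mxE jS u_coord.
- move=> a_eq; apply/matrixP => i j; rewrite ord1 !sum_delta_mxE.
  by case: ifP => // iS; rewrite u_coord; exact: a_eq.
Qed.

Theorem proposition2p4 (R : realType) (N : nat) (W : 'M[R]_N) (p tau2 alpha : R)
  (C : 'M[R]_N) (S : {set 'I_N}) (y : 'I_N -> R) (psi Psi : R -> R) :
  (0 < N)%N ->
  W^T = W ->
  (forall i j, 0 <= W i j) ->
  (forall i, 0 < degree W i) ->
  0 < tau2 -> 0 < alpha ->
  (exists P, is_mx_rpow (normalized_laplacian W p + tau2%:M) (- alpha) P /\
             C = tau2 `^ alpha *: P) ->
  (forall j, j \in S -> y j = 1 \/ y j = -1) ->
  prob_density psi ->
  C1_fun psi ->
  (forall x, psi (- x) = psi x) ->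
  strictly_log_concave psi ->
  (forall x, 0 < psi x) ->
  is_cdf_of psi Psi ->
  exists ustar : 'cV[R]_N,
    [/\ (* (i) unique minimizer *)
        (forall v, Jfun C S y Psi ustar <= Jfun C S y Psi v) /\
        (forall u, (forall v, Jfun C S y Psi u <= Jfun C S y Psi v) -> u = ustar),
        (* (ii) Euler-Lagrange equation *)
        invmx C *m ustar = \sum_(j in S) Ffun y psi Psi j (ustar j 0) *: delta_mx j 0,
        (* (iii) representer form *)
        (exists a : 'I_N -> R, ustar = \sum_(j in S) a j *: col j C) &
        (* (iv) characterization of coefficients *)
        (forall a : 'I_N -> R,
           let u := \sum_(j in S) a j *: col j C in
           invmx C *m u = \sum_(j in S) Ffun y psi Psi j (u j 0) *: delta_mx j 0 <->
           (forall j, j \in S ->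
              a j = Ffun y psi Psi j (\sum_(k in S) a k * C j k)))].
Proof.
(* Only the spectral form of C enters. *)
move=> _ _ _ _ tau2_gt0 _ [P [[Q [lam [QQ lam_gt0 _ P_def]] C_def]]] _
  psi_density psi_C1 _ psi_lc psi_gt0 Psi_cdf.
set K := spectral_mx (tau2 `^ (- alpha)) Q (map_mx (fun x => x `^ alpha) lam).
have [C_unit invC] : C \in unitmx /\ invmx C = K.
  rewrite C_def P_def; apply: spectral_mx_inv => // [|i].
    by rewrite powRN mulfV // gt_eqF // powR_gt0.
  by rewrite !mxE powRN mulVf // gt_eqF // powR_gt0.
have K_coercive : coercive K.
  by apply: spectral_mx_coercive; rewrite // ?powR_gt0 // => i; rewrite mxE powR_gt0.
have JE u : Jfun C S y Psi u = Jquad K S y Psi u by rewrite /Jfun invC.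
have Psi_gt0 := cdf_gt0 psi_density psi_C1 Psi_cdf psi_gt0.
have K_sym : K^T = K := tr_spectral_mx _ _ _.
have grad_of_min := Jquad_minimizer_grad (S := S) (y := y) Psi_gt0 K_sym
  (is_derive_cdf psi_density psi_C1 Psi_cdf).
have [u u_min] := Jquad_has_minimizer (S := S) (y := y) Psi_gt0
  (cdf_le1 psi_density Psi_cdf) (cdf_continuous psi_density psi_C1 Psi_cdf) K_coercive.
exists u; split.
- split => [v | w w_min]; first by rewrite !JE.
  have h_anti := density_div_cdf_antitone psi_density psi_C1 Psi_cdf psi_gt0 psi_lc.
  apply: (loglik_grad_eq_unique _ _ K_coercive h_anti _ (grad_of_min u u_min)).
  by apply: grad_of_min => v; rewrite -!JE.
- by rewrite invC; exact: grad_of_min.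
- exists (fun j => Ffun y psi Psi j (u j 0)).
  rewrite sum_scale_col; apply: (canRL (mulKVmx C_unit)).
  by rewrite invC; exact: grad_of_min.
- by move=> a; exact: representer_grad_eq.
Qed.
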